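(* Let $X$ be a T$_D$ space. Then the McKinsey scheme $\mathrm{M}:\ \Box\Diamond\varphi\to\Diamond\Box\varphi$ is $d$-valid in $X$ if and only if $X$ is crowded and openly irresolvable. Consequently, if $X$ is T$_D$ and crowded, then the following are equivalent: $\mathrm{M}$ is $d$-valid in $X$; $X$ is openly irresolvable; $\mathrm{M}$ is $C$-valid in $X$.
   Context: Topological models on a space $X$ are valuations of propositional variables by subsets of $X$, with Boolean connectives interpreted as set operations and $\Box=\neg\Diamond\neg$. In $d$-semantics, $\Diamond\varphi$ is interpreted as the derived set $\mathrm{d}_X$ (set of limit points: $x$ such that every $O-\{x\}$, $O$ an open neighbourhood of $x$, meets the set) of the truth set of $\varphi$; in $C$-semantics, $\Diamond\varphi$ is interpreted as the closure of the truth set of $\varphi$ (so $\Box$ is interior). A scheme is $d$-valid (resp. $C$-valid) in $X$ if all its instances are true at all points of all models on $X$ under $d$-semantics (resp. $C$-semantics). $X$ is T$_D$ if $\mathrm{d}_X\{x\}$ is closed for all $x$; crowded if it has no isolated points. A space is irresolvable if it has no two disjoint non-empty dense subsets; $X$ is openly irresolvable if every non-empty open subspace is irresolvable. *)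

From HB Require Import structures.
From mathcomp Require Import all_boot all_order.
From mathcomp Require Import all_classical topology.
Set Implicit Arguments. Unset Strict Implicit. Unset Printing Implicit Defensive.
Local Open Scope classical_set_scope.

Inductive form : Type :=
| Var : nat -> form
| Bot : form
| Neg : form -> form
| And : form -> form -> form
| Or  : form -> form -> form
| Imp : form -> form -> form
| Dia : form -> form.

Definition Box (f : form) : form := Neg (Dia (Neg f)).

Definition McKinsey (f : form) : form := Imp (Box (Dia f)) (Dia (Box f)).

Fixpoint truth (T : Type) (dia : set T -> set T) (v : nat -> set T)
    (f : form) : set T :=
  match f with
  | Var n => v n
  | Bot => set0
  | Neg g => ~` truth dia v g
  | And g h => truth dia v g `&` truth dia v h
  | Or g h => truth dia v g `|` truth dia v h
  | Imp g h => ~` truth dia v g `|` truth dia v h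
  | Dia g => dia (truth dia v g)
  end.

Definition derived (T : topologicalType) (A : set T) : set T := limit_point A.

Definition d_valid_M (T : topologicalType) : Prop :=
  forall (f : form) (v : nat -> set T) (x : T),
    truth (@derived T) v (McKinsey f) x.

Definition C_valid_M (T : topologicalType) : Prop :=
  forall (f : form) (v : nat -> set T) (x : T),
    truth (@closure T) v (McKinsey f) x.

Definition T_D (T : topologicalType) : Prop :=
  forall x : T, closed (derived [set x]).

Definition crowded (T : topologicalType) : Prop :=
  forall x : T, ~ open [set x].

(* A is a dense subset of the subspace U (subspace topology: opens are O `&` U) *)
Definition dense_in (T : topologicalType) (U A : set T) : Prop :=
  A `<=` U /\
  forall O : set T, open O -> (O `&` U) !=set0 -> (O `&` A) !=set0.

Definition irresolvable_in (T : topologicalType) (U : set T) : Prop :=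
  ~ exists A B : set T,
      [/\ dense_in U A, dense_in U B, A !=set0, B !=set0 & A `&` B = set0].

Definition openly_irresolvable (T : topologicalType) : Prop :=
  forall U : set T, open U -> U !=set0 -> irresolvable_in U.

(** Everything rests on one property of openly irresolvable spaces: a set
    dense in a non-empty open set [U] has interior points in [U], since
    otherwise it and its complement would split [U] into two disjoint dense
    pieces.  In C-semantics McKinsey's scheme says exactly
    [int (cl P) <= cl (int P)], which is this property.  In d-semantics,
    in a crowded T_D space every point of an open set [U] contained in
    [cl P] is a limit point of [P] (T_D lets us shrink a neighbourhood of
    [x] away from [cl {x}] while staying non-empty), and crowdedness moves
    the interior points found above away from the point of evaluation;
    conversely an isolated point falsifies the scheme, since it lies in no
    derived set. *)

From mathcomp Require Import all_boot all_order all_classical topology.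
Set Implicit Arguments. Unset Strict Implicit. Unset Printing Implicit Defensive.
Local Open Scope classical_set_scope.

Definition box_of (T : Type) (dia : set T -> set T) (A : set T) : set T :=
  ~` dia (~` A).

Lemma McKinsey_validE (T : Type) (dia : set T -> set T) :
  (forall f v x, truth dia v (McKinsey f) x) <->
  (forall A, box_of dia (dia A) `<=` dia (box_of dia A)).
Proof.
split=> [hM A x hx | hM f v x /=].
  by have [] := hM (Var 0) (fun _ => A) x.
have [hx|hx] := pselect (box_of dia (dia (truth dia v f)) x); last by left.
by right; exact: hM.
Qed.

Section Topology.
Context {X : topologicalType}.
Implicit Types (A B U : set X) (x : X).

Lemma box_of_closure A : box_of closure A = A°.
Proof. by rewrite /box_of closure_setC setCK. Qed.

Lemma interior_sub_box_derived A : A° `<=` box_of (@derived X) A.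
Proof. by move=> x Ax dx; have [y [_ nAy Ay]] := dx _ Ax. Qed.

Lemma open_setI_closure U A : open U -> U `&` closure A `<=` closure (U `&` A).
Proof.
move=> oU x [Ux clAx] B /(filterI (open_nbhs_nbhs (conj oU Ux))) /clAx.
by move=> [y [Ay [Uy By]]]; exists y.
Qed.

Lemma open_dense_inP U A :
  open U -> dense_in U A <-> A `<=` U /\ U `<=` closure A.
Proof.
move=> oU; split=> -[AU hA]; split=> //.
  move=> x Ux B; rewrite nbhsE => -[O [oO Ox] OB].
  have [y [Oy Ay]] := hA O oO (ex_intro _ x (conj Ox Ux)).
  by exists y; split=> //; exact: OB.
move=> O oO [x [Ox Ux]].
have [y [Ay Oy]] := hA x Ux O (open_nbhs_nbhs (conj oO Ox)).
by exists y.
Qed.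

Lemma dense_in_neq0 U A : U !=set0 -> dense_in U A -> A !=set0.
Proof.
move=> [x Ux] [_ hA].
by have [y [_ Ay]] := hA setT openT (ex_intro _ x (conj I Ux)); exists y.
Qed.

Lemma not_derived_set1 x : ~ derived [set x] x.
Proof. by move=> dx; have [y [/eqP yx yx' _]] := dx setT filterT. Qed.

Lemma not_derived_open_set1 A x : open [set x] -> ~ derived A x.
Proof.
move=> ox dx; have [y [/eqP yx _ xy]] := dx _ (open_nbhs_nbhs (conj ox erefl)).
exact: yx.
Qed.

Section Crowded.
Hypothesis crowdedX : crowded X.

Lemma crowded_open_neq U x : open U -> U !=set0 -> exists2 y, U y & y != x.
Proof.
move=> oU [u Uu]; apply: contrapT => hU.
suff x1U : [set x] = U by rewrite -x1U in oU; exact: crowdedX oU.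
have Ux : forall y, U y -> y = x.
  by move=> y Uy; apply: contrapT => /eqP yx; apply: hU; exists y.
by apply/seteqP; split=> [y -> | y /Ux //]; rewrite -(Ux u Uu).
Qed.

Lemma crowded_closure_setC1 x : closure (~` [set x]) = setT.
Proof.
apply/seteqP; split=> // y _; have [->|yx] := pselect (y = x); last first.
  exact: subset_closure.
move=> B /nbhs_interior Bx.
have [z Bz /eqP zx] :=
  crowded_open_neq x (@open_interior _ B) (ex_intro _ x (nbhs_singleton Bx)).
by exists z; split=> //; exact: interior_subset.
Qed.

Section TD.
Hypothesis TDX : T_D X.

Lemma TD_open_setD_closure1 U x : open U -> U x -> U `\` closure [set x] !=set0.
Proof.
move=> oU Ux.
have cl1 : closure [set x] `<=` [set x] `|` derived [set x].
  by rewrite closure_isolated_limit_point => y [/isolatedS|]; [left | right].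
have oUD : open (U `\` derived [set x]) by apply: openI => //; rewrite openC.
have [y [Uy ndy] /eqP yx] :=
  crowded_open_neq x oUD (ex_intro _ x (conj Ux (@not_derived_set1 x))).
by exists y; split=> // /cl1 [].
Qed.

Lemma TD_open_sub_closure_derived U A :
  open U -> U `<=` closure A -> U `<=` derived A.
Proof.
move=> oU UA x Ux B /nbhs_interior Bx.
have oO : open (B° `&` U `\` closure [set x]).
  by apply: openI; [apply: openI => //; exact: open_interior |
                    rewrite openC; exact: closed_closure].
have [z Oz] := TD_open_setD_closure1 (openI (@open_interior _ B) oU)
  (conj (nbhs_singleton Bx) Ux).
have [a [Aa [[Ba _] nxa]]] := UA z Oz.1.2 _ (open_nbhs_nbhs (conj oO Oz)).
exists a; split=> //; last exact: interior_subset.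
by apply/eqP => ax; apply: nxa; rewrite ax; exact: subset_closure.
Qed.

End TD.
End Crowded.

Lemma openly_irresolvable_interior U A : openly_irresolvable X ->
  open U -> U !=set0 -> U `<=` closure A -> U `&` A° !=set0.
Proof.
move=> hOI oU U0 UA; apply: contrapT => noint.
have dA : dense_in U (U `&` A).
  apply/open_dense_inP => //; split=> [y [] // | y Uy].
  exact: open_setI_closure (conj Uy (UA y Uy)).
have dNA : dense_in U (U `&` ~` A).
  apply/open_dense_inP => //; split=> [y [] // | y Uy].
  apply: open_setI_closure (conj Uy _) => //.
  by rewrite closure_setC => Ay; apply: noint; exists y.
apply: (hOI U oU U0); exists (U `&` A), (U `&` ~` A); split=> //.
- exact: dense_in_neq0 dA.
- exact: dense_in_neq0 dNA.
- by apply/seteqP; split=> // y [[_ ?] [_ ?]].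
Qed.

Lemma d_valid_M_crowded : d_valid_M X -> crowded X.
Proof.
move=> /McKinsey_validE hM x ox.
exact: (not_derived_open_set1 ox) (hM set0 x (not_derived_open_set1 ox)).
Qed.

Lemma d_valid_M_openly_irresolvable :
  T_D X -> d_valid_M X -> openly_irresolvable X.
Proof.
move=> TDX hM U oU [x Ux] [A [B [dA dB _ _ AB]]].
have crX := d_valid_M_crowded hM; move/McKinsey_validE in hM.
have [_ UclA] := (open_dense_inP A oU).1 dA.
have [_ UclB] := (open_dense_inP B oU).1 dB.
have UclNA : U `<=` closure (~` A).
  move=> y /UclB; apply: closureS => z Bz Az.
  by suff : (A `&` B) z by rewrite AB.
have UdA := TD_open_sub_closure_derived crX TDX oU UclA.
have UdNA := TD_open_sub_closure_derived crX TDX oU UclNA.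
have dAx : (derived A)° x by move: UdA; rewrite open_subsetE // => /(_ x Ux).
have [y [_ ndy Uy]] :=
  hM A x (interior_sub_box_derived dAx) U (open_nbhs_nbhs (conj oU Ux)).
exact: ndy (UdNA y Uy).
Qed.

Lemma openly_irresolvable_d_valid_M :
  openly_irresolvable X -> crowded X -> d_valid_M X.
Proof.
move=> hOI crX; apply/McKinsey_validE => A x.
rewrite /box_of /derived /= not_limit_pointE => -[N nN NA] V nV.
(* [N] minus [x] lies in [derived A], and crowdedness puts [x] in its closure. *)
set U := (N `&` V)°.
have oU : open U := @open_interior _ _.
have Ux : U x by exact: nbhs_singleton (nbhs_interior (filterI nN nV)).
have UclA : U `<=` closure A.
  have UxA : U `&` ~` [set x] `<=` closure A.
    move=> z [/interior_subset [Nz _] zx]; apply: subset_limit_point.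
    by apply: contrapT => ndz; apply: zx; exact: NA (conj ndz Nz).
  move=> y Uy; apply: closed_closure; apply: (closureS UxA).
  by apply: open_setI_closure oU _ _; split; last by rewrite crowded_closure_setC1.
have [w [Uw Aiw]] := openly_irresolvable_interior hOI oU (ex_intro _ x Ux) UclA.
have [z [Uz Aiz] zx] := crowded_open_neq crX x (openI oU (@open_interior _ A))
  (ex_intro _ w (conj Uw Aiw)).
exists z; split=> //; first exact: interior_sub_box_derived.
by have [] := interior_subset Uz.
Qed.

Lemma openly_irresolvable_C_valid_M : openly_irresolvable X -> C_valid_M X.
Proof.
move=> hOI; apply/McKinsey_validE => A; rewrite !box_of_closure => x clAx B nB.
have oU : open ((closure A)° `&` B°) by apply: openI; exact: open_interior.
have Ux : ((closure A)° `&` B°) x.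
  by split=> //; exact: nbhs_singleton (nbhs_interior nB).
have UclA : (closure A)° `&` B° `<=` closure A by move=> y [/interior_subset].
have [w [[_ Bw] Aw]] := openly_irresolvable_interior hOI oU (ex_intro _ x Ux) UclA.
by exists w; split=> //; exact: interior_subset.
Qed.

Lemma C_valid_M_openly_irresolvable : C_valid_M X -> openly_irresolvable X.
Proof.
move=> /McKinsey_validE hM U oU [x Ux] [A [B [dA dB _ _ AB]]].
have [_ UclA] := (open_dense_inP A oU).1 dA.
have [_ UclB] := (open_dense_inP B oU).1 dB.
have clAx : (closure A)° x by move: UclA; rewrite open_subsetE // => /(_ x Ux).
have := hM A x; rewrite !box_of_closure => /(_ clAx) clAix.
have [w [Aiw Uw]] := clAix U (open_nbhs_nbhs (conj oU Ux)).
have oAU : open (A° `&` U) by apply: openI => //; exact: open_interior.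
have [b [Bb [Aib _]]] := UclB w Uw _ (open_nbhs_nbhs (conj oAU (conj Aiw Uw))).
suff : (A `&` B) b by rewrite AB.
by split=> //; exact: interior_subset.
Qed.

End Topology.

Theorem corollary1 (X : topologicalType) (hTD : T_D X) :
  (d_valid_M X <-> crowded X /\ openly_irresolvable X) /\
  (crowded X ->
     (d_valid_M X <-> openly_irresolvable X) /\
     (openly_irresolvable X <-> C_valid_M X)).
Proof.
have d_valid_ME : d_valid_M X <-> crowded X /\ openly_irresolvable X.
  split=> [hM | [crX hOI]]; last exact: openly_irresolvable_d_valid_M.
  by split; [exact: d_valid_M_crowded | exact: d_valid_M_openly_irresolvable].
split=> // crX; rewrite d_valid_ME; split; first by split=> [[]|].
by split; [exact: openly_irresolvable_C_valid_M |
           exact: C_valid_M_openly_irresolvable].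
Qed.
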